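(* Let $\mathcal S$ and $\Sigma$ be two finite fundamental systems, generating the groups $G$ and $\Gamma$ respectively. Assume there exist an orientation preserving homeomorphism $h:[0,1]\to[0,1]$ and a bijection $\varphi:\mathcal S\to\Sigma$, written $\varphi(f,S_f,I_f)=(\varphi(f),S_{\varphi(f)},I_{\varphi(f)})$, such that for every $(f,S_f,I_f)\in\mathcal S$ one has $S_{\varphi(f)}=h(S_f)$ and $I_{\varphi(f)}=h(I_f)$. Then there is a homeomorphism $\tilde h:[0,1]\to[0,1]$ such that $\tilde h f\tilde h^{-1}=\varphi(f)$ for every $(f,S_f,I_f)\in\mathcal S$; in particular $\Gamma=\{\tilde h g\tilde h^{-1}: g\in G\}$.
   Context: A homeomorphism $f$ of $[0,1]$ is simple if $[0,1]\setminus\mathrm{Fix}(f)$ has exactly one connected component; its closure is the support $S_f$ of $f$. It is positive if $f(x)\ge x$ for all $x$. A fundamental domain of a simple $f$ is a segment $[x,f(x)]$ with $x$ in the interior of $S_f$. A fundamental system is a family $\mathcal S$ of triples $(f,S_f,I_f)$ such that each $f$ is a simple positive homeomorphism of $[0,1]$, $S_f$ is its support and $I_f\subset S_f$ is a fundamental domain of $f$, and for any two distinct triples in $\mathcal S$: either $S_f$ and $S_g$ have disjoint interiors, or $S_f\subset I_g$, or $S_g\subset I_f$. *)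

From Stdlib Require Import Reals Lra List.
From Stdlib Require Export Reals List.
Open Scope R_scope.

(* Maps of [0,1] are represented as functions R -> R; only their values on
   [0,1] matter. *)
Definition in01 (x : R) : Prop := 0 <= x <= 1.

Definition cont01 (f : R -> R) : Prop :=
  forall x, in01 x -> forall eps, eps > 0 ->
    exists delta, delta > 0 /\
      forall y, in01 y -> Rabs (y - x) < delta -> Rabs (f y - f x) < eps.

Definition homeo01 (f : R -> R) : Prop :=
  (forall x, in01 x -> in01 (f x)) /\ cont01 f /\
  exists g : R -> R,
    (forall x, in01 x -> in01 (g x)) /\ cont01 g /\
    (forall x, in01 x -> g (f x) = x) /\
    (forall x, in01 x -> f (g x) = x).

Definition or_pres_homeo01 (h : R -> R) : Prop :=
  homeo01 h /\ forall x y, in01 x -> in01 y -> x < y -> h x < h y.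

Definition nonfix (f : R -> R) (x : R) : Prop := in01 x /\ f x <> x.

(* a subset of R is connected iff it is an interval (convex) *)
Definition connectedR (U : R -> Prop) : Prop :=
  forall x y z, U x -> U y -> x <= z <= y -> U z.

(* f simple: [0,1] \ Fix(f) has exactly one connected component,
   i.e. it is nonempty and connected. *)
Definition simple01 (f : R -> R) : Prop :=
  homeo01 f /\ (exists x, nonfix f x) /\ connectedR (nonfix f).

Definition positive01 (f : R -> R) : Prop := forall x, in01 x -> x <= f x.

Definition closureR (U : R -> Prop) (x : R) : Prop :=
  forall eps, eps > 0 -> exists y, U y /\ Rabs (y - x) < eps.

(* A triple (f, S_f, I_f) with S_f = [sa, sb] and I_f = [ia, ib]. *)
Record triple := Triple {
  tf : R -> R;
  sa : R; sb : R;
  ia : R; ib : R }.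

Definition seg (a b x : R) : Prop := a <= x <= b.

Definition is_support (t : triple) : Prop :=
  forall x, closureR (nonfix (tf t)) x <-> seg (sa t) (sb t) x.

Definition is_fund_domain (t : triple) : Prop :=
  sa t < ia t < sb t /\ ib t = tf t (ia t).

Definition good_triple (t : triple) : Prop :=
  simple01 (tf t) /\ positive01 (tf t) /\ is_support t /\ is_fund_domain t.

Definition seg_sub (a b c d : R) : Prop :=
  forall x, seg a b x -> seg c d x.

Definition disj_int (a b c d : R) : Prop :=
  forall x, ~ (a < x < b /\ c < x < d).

Definition fund_system {Idx : Type} (T : Idx -> triple) : Prop :=
  (forall i, good_triple (T i)) /\
  forall i j, i <> j ->
    disj_int (sa (T i)) (sb (T i)) (sa (T j)) (sb (T j)) \/
    seg_sub (sa (T i)) (sb (T i)) (ia (T j)) (ib (T j)) \/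
    seg_sub (sa (T j)) (sb (T j)) (ia (T i)) (ib (T i)).

Definition finite_type (A : Type) : Prop := exists l : list A, forall a, In a l.

Definition bijective_map {A B : Type} (f : A -> B) : Prop :=
  (forall x y, f x = f y -> x = y) /\ (forall y, exists x, f x = y).

Definition image_seg (h : R -> R) (a b y : R) : Prop :=
  exists x, seg a b x /\ h x = y.

(* The group generated by the maps F i (as maps of [0,1], i.e. up to
   equality on [0,1]). *)
Inductive gen {Idx : Type} (F : Idx -> R -> R) : (R -> R) -> Prop :=
| gen_id : gen F (fun x => x)
| gen_ext : forall g g', gen F g -> (forall x, in01 x -> g x = g' x) -> gen F g'
| gen_mul : forall i g, gen F g -> gen F (fun x => F i (g x))
| gen_inv : forall i g g', gen F g ->
    (forall x, in01 x -> in01 (g' x) /\ F i (g' x) = g x) -> gen F g'.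

(* We build a homeomorphism ht of [0,1] conjugating every
   f of S to its partner in Sigma; conjugating the generators then conjugates
   the generated groups.

   By an escape argument, the translates f^n [x0, f x0) of its
     fundamental domain tile (a,b).
   - Extension: an increasing bijection ht0 matching the support and the
     fundamental domain of a bump f with those of a bump f' is modified into
     a conjugacy from f to f', by setting ht = f'^n o ht0 o f^-n on the n-th
     translate and leaving ht0 unchanged outside (a,b).
   - The conjugacy of the whole system is built by induction, extending over
     the widest support last: every narrower triple is either disjoint from
     it or nested in its fundamental domain, so the extension does not
     disturb the conjugacies already obtained. *)

From Stdlib Require Import Reals List Lra Lia ZArith Classical ClassicalEpsilon.
Open Scope R_scope.

Definition maps01 (f : R -> R) : Prop := forall x, in01 x -> in01 (f x).
Definition incr01 (f : R -> R) : Prop :=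
  forall x y, in01 x -> in01 y -> x < y -> f x < f y.
Definition onto01 (f : R -> R) : Prop :=
  forall w, in01 w -> exists x, in01 x /\ f x = w.

Section Increasing.
Variable f : R -> R.
Hypothesis f_incr : incr01 f.

Lemma incr01_le x y : in01 x -> in01 y -> x <= y -> f x <= f y.
Proof. intros Hx Hy [Hxy | ->]; [left; apply f_incr; auto | lra]. Qed.

Lemma incr01_lt_rev x y : in01 x -> in01 y -> f x < f y -> x < y.
Proof.
  intros Hx Hy H. destruct (Rlt_le_dec x y) as [|Hyx]; auto.
  assert (f y <= f x) by (apply incr01_le; auto). lra.
Qed.

Lemma incr01_le_rev x y : in01 x -> in01 y -> f x <= f y -> x <= y.
Proof.
  intros Hx Hy H. destruct (Rle_lt_dec x y) as [|Hyx]; auto.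
  assert (f y < f x) by (apply f_incr; auto). lra.
Qed.

(* An increasing map of [0,1] onto [0,1] has no jumps: to the right of x, f
   stays below the value f x + eps/2 (or 1) taken at some point x2 >= x. *)
Lemma incr01_cont_right x eps : maps01 f -> onto01 f -> in01 x -> eps > 0 ->
  exists d, d > 0 /\ forall y, in01 y -> x <= y < x + d -> f y - f x < eps.
Proof.
  intros Hm Ho Hx Heps. assert (Hfx := Hm x Hx). unfold in01 in Hfx.
  destruct (Ho (Rmin 1 (f x + eps/2))) as [x2 [Hx2 E2]].
  { unfold in01, Rmin; destruct Rle_dec; lra. }
  destruct (Rlt_le_dec x x2) as [Hlt | Hle].
  - exists (x2 - x). split; [lra|]. intros y Hy Hxy.
    assert (f y < f x2) by (apply f_incr; auto; lra).
    revert E2; unfold Rmin; destruct Rle_dec; intros; lra.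
  - (* x2 <= x forces f x = 1 *)
    exists 1. split; [lra|]. intros y Hy Hxy.
    assert (f x2 <= f x) by (apply incr01_le; auto).
    assert (Hfy := Hm y Hy). unfold in01 in Hfy.
    revert E2; unfold Rmin; destruct Rle_dec; intros; lra.
Qed.

(* Symmetrically, to the left of x f stays above f x - eps/2 (or 0). *)
Lemma incr01_cont_left x eps : maps01 f -> onto01 f -> in01 x -> eps > 0 ->
  exists d, d > 0 /\ forall y, in01 y -> x - d < y <= x -> f x - f y < eps.
Proof.
  intros Hm Ho Hx Heps. assert (Hfx := Hm x Hx). unfold in01 in Hfx.
  destruct (Ho (Rmax 0 (f x - eps/2))) as [x1 [Hx1 E1]].
  { unfold in01, Rmax; destruct Rle_dec; lra. }
  destruct (Rlt_le_dec x1 x) as [Hlt | Hle].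
  - exists (x - x1). split; [lra|]. intros y Hy Hxy.
    assert (f x1 < f y) by (apply f_incr; auto; lra).
    revert E1; unfold Rmax; destruct Rle_dec; intros; lra.
  - (* x <= x1 forces f x = 0 *)
    exists 1. split; [lra|]. intros y Hy Hxy.
    assert (f x <= f x1) by (apply incr01_le; auto).
    assert (Hfy := Hm y Hy). unfold in01 in Hfy.
    revert E1; unfold Rmax; destruct Rle_dec; intros; lra.
Qed.

Lemma incr01_cont : maps01 f -> onto01 f -> cont01 f.
Proof.
  intros Hm Ho x Hx eps Heps.
  destruct (incr01_cont_left x eps Hm Ho Hx Heps) as [d1 [Hd1 Left]].
  destruct (incr01_cont_right x eps Hm Ho Hx Heps) as [d2 [Hd2 Right]].
  exists (Rmin d1 d2). split; [unfold Rmin; destruct Rle_dec; lra|].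
  intros y Hy Hd.
  assert (Q1 := Rlt_le_trans _ _ _ Hd (Rmin_l _ _)).
  assert (Q2 := Rlt_le_trans _ _ _ Hd (Rmin_r _ _)).
  destruct (Rle_lt_dec y x).
  - assert (f y <= f x) by (apply incr01_le; auto).
    rewrite Rabs_left1 in Q1 by lra. rewrite Rabs_left1 by lra.
    assert (Q := Left y Hy ltac:(lra)). lra.
  - assert (f x <= f y) by (apply incr01_le; auto; lra).
    rewrite Rabs_right in Q2 by lra. rewrite Rabs_right by lra.
    apply Right; auto; lra.
Qed.

End Increasing.

Lemma incr01_homeo f : incr01 f -> maps01 f -> onto01 f -> homeo01 f.
Proof.
  intros Hi Hm Ho.
  set (g := fun w => epsilon (inhabits 0) (fun x => in01 x /\ f x = w)).
  assert (Hg : forall w, in01 w -> in01 (g w) /\ f (g w) = w).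
  { intros w Hw. unfold g. apply epsilon_spec. apply Ho; auto. }
  assert (Hgf : forall x, in01 x -> g (f x) = x).
  { intros x Hx. destruct (Hg (f x) (Hm x Hx)) as [Hgx E].
    apply Rle_antisym; apply (incr01_le_rev f); auto; lra. }
  assert (Hgm : maps01 g) by (intros w Hw; apply Hg; auto).
  assert (Hgi : incr01 g).
  { intros w1 w2 H1 H2 H12. apply (incr01_lt_rev f); auto.
    rewrite (proj2 (Hg w1 H1)), (proj2 (Hg w2 H2)); auto. }
  assert (Hgo : onto01 g) by (intros x Hx; exists (f x); split; auto).
  split; [auto|]. split; [apply incr01_cont; auto|].
  exists g. split; [auto|]. split; [apply incr01_cont; auto|].
  split; auto. intros x Hx; apply Hg; auto.
Qed.

(* Clamping to [0,1] turns a map continuous on [0,1] into a map continuous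
   on R, which gives the intermediate value theorem on [0,1]. *)
Definition clamp01 (x : R) : R := Rmax 0 (Rmin 1 x).

Lemma clamp01_in01 x : in01 (clamp01 x).
Proof. unfold clamp01, in01, Rmax, Rmin; repeat destruct Rle_dec; lra. Qed.

Lemma clamp01_id x : in01 x -> clamp01 x = x.
Proof. unfold clamp01, in01, Rmax, Rmin; intros; repeat destruct Rle_dec; lra. Qed.

Lemma clamp01_lipschitz s t : Rabs (clamp01 s - clamp01 t) <= Rabs (s - t).
Proof.
  unfold clamp01, Rmax, Rmin; repeat destruct Rle_dec; unfold Rabs;
  repeat destruct Rcase_abs; lra.
Qed.

Lemma cont01_ivt f a b c : cont01 f -> in01 a -> in01 b -> a <= b ->
  f a <= c <= f b -> exists z, a <= z <= b /\ f z = c.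
Proof.
  intros Hc Ha Hb Hab Hfc.
  assert (Hcont : continuity (fun t => f (clamp01 t) - c)).
  { intros t eps Heps.
    destruct (Hc (clamp01 t) (clamp01_in01 t) eps Heps) as [d [Hd H]].
    exists d; split; auto. intros s [_ Hs]. simpl in *. unfold R_dist in *.
    replace (f (clamp01 s) - c - (f (clamp01 t) - c))
      with (f (clamp01 s) - f (clamp01 t)) by ring.
    apply H; [apply clamp01_in01 | eapply Rle_lt_trans; [apply clamp01_lipschitz | exact Hs]]. }
  destruct (IVT_cor _ a b Hcont Hab) as [z [Hz Hfz]].
  { rewrite !clamp01_id by auto. nra. }
  assert (Hz01 : in01 z) by (unfold in01 in *; lra).
  exists z. split; auto. rewrite clamp01_id in Hfz by auto. lra.
Qed.

Section PositiveHomeo.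
Variable f : R -> R.
Hypothesis f_homeo : homeo01 f.
Hypothesis f_pos : positive01 f.

Lemma positive_homeo_fixes_1 : f 1 = 1.
Proof.
  destruct f_homeo as [Hm _]. assert (H1 : in01 1) by (unfold in01; lra).
  assert (Hp := f_pos 1 H1). assert (Hq := Hm 1 H1). unfold in01 in Hq. lra.
Qed.

(* 0 is the image of some g 0 <= f (g 0) = 0, so g 0 = 0 and f 0 = 0. *)
Lemma positive_homeo_fixes_0 : f 0 = 0.
Proof.
  destruct f_homeo as [_ [_ [g [Hgm [_ [_ Hfg]]]]]].
  assert (H0 : in01 0) by (unfold in01; lra).
  assert (Hg0 := Hgm 0 H0). assert (Hp := f_pos (g 0) Hg0). rewrite Hfg in Hp by auto.
  assert (E : g 0 = 0) by (unfold in01 in Hg0; lra).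
  rewrite <- E at 1. apply Hfg; auto.
Qed.

(* A continuous injective map fixing 0 is increasing: if x < y but f y < f x,
   the intermediate value theorem on [0, x] produces a second preimage of f y. *)
Lemma positive_homeo_incr : incr01 f.
Proof.
  assert (Hf0 := positive_homeo_fixes_0).
  destruct f_homeo as [Hm [Hc [g [_ [_ [Hgf _]]]]]].
  assert (Hinj : forall x y, in01 x -> in01 y -> f x = f y -> x = y).
  { intros x y Hx Hy E. rewrite <- (Hgf x), <- (Hgf y), E; auto. }
  intros x y Hx Hy Hxy.
  destruct (Rlt_le_dec (f x) (f y)) as [|[Hlt | Heq]]; auto; exfalso.
  - assert (Hpy := f_pos y Hy). assert (H0 : in01 0) by (unfold in01; lra).
    destruct (cont01_ivt f 0 x (f y) Hc H0 Hx) as [z [Hz Hfz]];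
      [unfold in01 in *; lra | unfold in01 in *; lra |].
    assert (Hz01 : in01 z) by (unfold in01 in *; lra).
    assert (z = y) by (apply Hinj; auto). lra.
  - assert (x = y) by (apply Hinj; auto). lra.
Qed.

End PositiveHomeo.

Lemma nonfix_open f x : cont01 f -> in01 x -> f x <> x ->
  exists d, d > 0 /\ forall y, in01 y -> Rabs (y - x) < d -> f y <> y.
Proof.
  intros Hc Hx Hne.
  set (e := Rabs (f x - x) / 2).
  assert (He : e > 0) by (unfold e; assert (Rabs (f x - x) > 0) by (apply Rabs_pos_lt; lra); lra).
  destruct (Hc x Hx e He) as [d [Hd Hcd]].
  exists (Rmin d e). split; [unfold Rmin; destruct Rle_dec; lra|].
  intros y Hy Hyx Hfy.
  assert (Q := Hcd y Hy (Rlt_le_trans _ _ _ Hyx (Rmin_l _ _))).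
  assert (Q' := Rlt_le_trans _ _ _ Hyx (Rmin_r _ _)).
  rewrite Hfy in Q. unfold e in *.
  revert Q Q'; unfold Rabs; repeat destruct Rcase_abs; intros; lra.
Qed.

Lemma closure_in01 f x : closureR (nonfix f) x -> in01 x.
Proof.
  intros H. unfold in01. split; apply Rnot_lt_le; intro Hx.
  - destruct (H (-x)) as [y [[Hy _] Hd]]; [lra|].
    unfold in01 in Hy. unfold Rabs in Hd; destruct Rcase_abs in Hd; lra.
  - destruct (H (x - 1)) as [y [[Hy _] Hd]]; [lra|].
    unfold in01 in Hy. unfold Rabs in Hd; destruct Rcase_abs in Hd; lra.
Qed.

(* This is the usable content of a triple
   of a fundamental system with support [a,b] and fundamental domain
   [x0, f x0]. *)
Record bump (f g : R -> R) (a b x0 : R) : Prop := {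
  bump_maps : maps01 f;
  bump_inv_maps : maps01 g;
  bump_incr : incr01 f;
  bump_inv_incr : incr01 g;
  bump_inv_l : forall x, in01 x -> g (f x) = x;
  bump_inv_r : forall x, in01 x -> f (g x) = x;
  bump_cont : cont01 f;
  bump_inv_cont : cont01 g;
  bump_order : 0 <= a /\ a < x0 /\ x0 < b /\ b <= 1;
  bump_fix : forall x, in01 x -> ~ (a < x < b) -> f x = x;
  bump_push : forall x, a < x < b -> x < f x }.

Section GoodTriple.
Variable t : triple.
Hypothesis t_good : good_triple t.

Lemma good_nonfix_in_support x : nonfix (tf t) x -> sa t <= x <= sb t.
Proof.
  destruct t_good as [_ [_ [Hsupp _]]]. intros Hx. apply Hsupp.
  intros e He. exists x. split; auto. replace (x - x) with 0 by ring.
  rewrite Rabs_R0. lra.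
Qed.

Lemma good_support_in01 : in01 (sa t) /\ in01 (sb t).
Proof.
  destruct t_good as [_ [_ [Hsupp [Hfd _]]]].
  split; apply (closure_in01 (tf t)), Hsupp; unfold seg; lra.
Qed.

(* Points outside the open support are fixed: a moved point lies in
   [sa, sb], and a moved endpoint would, by continuity, force points just
   outside [sa, sb] to move too (unless it is 0 or 1, which a positive
   homeomorphism fixes). *)
Lemma good_fix_outside x : in01 x -> ~ (sa t < x < sb t) -> tf t x = x.
Proof.
  destruct t_good as [[Hh _] [Hp _]].
  assert (Hc : cont01 (tf t)) by apply Hh.
  intros Hx Hout. apply NNPP; intro Hne.
  destruct (good_nonfix_in_support x (conj Hx Hne)) as [Hax Hxb].
  destruct (nonfix_open (tf t) x Hc Hx Hne) as [d [Hd Hnear]].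
  set (e := Rmin d 1 / 2). assert (He : 0 < e < d) by (unfold e, Rmin; destruct Rle_dec; lra).
  destruct (Rle_lt_dec x (sa t)) as [Hxa | Hxa].
  - destruct (Req_dec x 0) as [-> | Hx0]; [apply Hne, positive_homeo_fixes_0; auto|].
    set (y := Rmax 0 (x - e)).
    assert (Hy : in01 y /\ y < x /\ Rabs (y - x) < d).
    { unfold y, Rmax; unfold in01 in *; destruct Rle_dec;
      rewrite Rabs_left1 by lra; repeat split; lra. }
    destruct Hy as [Hy [Hyx Hyd]].
    assert (Q := good_nonfix_in_support y (conj Hy (Hnear y Hy Hyd))). lra.
  - destruct (Req_dec x 1) as [-> | Hx1]; [apply Hne, positive_homeo_fixes_1; auto|].
    set (y := Rmin 1 (x + e)).
    assert (Hy : in01 y /\ x < y /\ Rabs (y - x) < d).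
    { unfold y, Rmin; unfold in01 in *; destruct Rle_dec;
      rewrite Rabs_right by lra; repeat split; lra. }
    destruct Hy as [Hy [Hyx Hyd]].
    assert (Q := good_nonfix_in_support y (conj Hy (Hnear y Hy Hyd))). lra.
Qed.

(* Inside the support every point is moved, since the set of moved points is
   an interval whose closure is [sa, sb]; positivity gives the direction. *)
Lemma good_push_inside x : sa t < x < sb t -> x < tf t x.
Proof.
  destruct t_good as [[_ [_ Hconn]] [Hp [Hsupp _]]]. destruct good_support_in01 as [Ha Hb].
  intros Hx. assert (Hx01 : in01 x) by (unfold in01 in *; lra).
  destruct (proj2 (Hsupp (sa t)) ltac:(unfold seg; lra) (x - sa t)) as [y [Hy Hya]]; [lra|].
  destruct (proj2 (Hsupp (sb t)) ltac:(unfold seg; lra) (sb t - x)) as [z [Hz Hzb]]; [lra|].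
  assert (y <= x) by (revert Hya; unfold Rabs; destruct Rcase_abs; intros; lra).
  assert (x <= z) by (revert Hzb; unfold Rabs; destruct Rcase_abs; intros; lra).
  destruct (Hconn y z x Hy Hz) as [_ Hne]; [lra|].
  destruct (Hp x Hx01); auto. exfalso; auto.
Qed.

Lemma good_bump : exists g, bump (tf t) g (sa t) (sb t) (ia t).
Proof.
  destruct t_good as [[Hh _] [Hp [_ [Hfd _]]]]. destruct good_support_in01 as [Ha Hb].
  assert (Hi := positive_homeo_incr (tf t) Hh Hp).
  destruct Hh as [Hm [Hc [g [Hgm [Hgc [Hgf Hfg]]]]]].
  exists g. constructor; auto.
  - intros w1 w2 H1 H2 H12. apply (incr01_lt_rev (tf t)); auto. rewrite !Hfg; auto.
  - unfold in01 in *. lra.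
  - exact good_fix_outside.
  - exact good_push_inside.
Qed.

End GoodTriple.

(** Dynamics of a bump. *)

Lemma iter_in01 F k x : maps01 F -> in01 x -> in01 (Nat.iter k F x).
Proof. intros HF Hx. induction k; simpl; auto. Qed.

(* A continuous self-map of [0,1] that pushes every point of [u0, y] to the
   right carries u0 beyond y after finitely many steps: otherwise the orbit
   increases to a limit l <= y, and continuity at l contradicts F l > l. *)
Lemma escape (F : R -> R) (u0 y : R) :
  cont01 F -> maps01 F -> in01 u0 -> y <= 1 ->
  (forall z, u0 <= z <= y -> F z > z) ->
  exists k, Nat.iter k F u0 > y.
Proof.
  intros Hc Hm Hu Hy Hpos. apply NNPP; intro Hn.
  assert (Hall : forall k, Nat.iter k F u0 <= y).
  { intro k. apply Rnot_lt_le. intro Hk. apply Hn. exists k. lra. }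
  assert (Hin : forall k, in01 (Nat.iter k F u0)) by (intro k; apply iter_in01; auto).
  assert (Hge : forall k, u0 <= Nat.iter k F u0).
  { induction k; simpl; [lra|].
    specialize (Hpos (Nat.iter k F u0) (conj IHk (Hall k))). lra. }
  destruct (completeness (fun z => exists k, z = Nat.iter k F u0)) as [l [Hub Hlub]].
  { exists y. intros z [k ->]. apply Hall. }
  { exists u0. exists 0%nat. reflexivity. }
  assert (Hl1 : u0 <= l) by (apply Hub; exists 0%nat; reflexivity).
  assert (Hl2 : l <= y) by (apply Hlub; intros z [k ->]; apply Hall).
  assert (Hl01 : in01 l) by (unfold in01 in *; lra).
  assert (HFl := Hpos l (conj Hl1 Hl2)).
  destruct (Hc l Hl01 (F l - l)) as [d [Hd Hcd]]; [lra|].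
  (* some iterate lies in (l - d, l], and then its image exceeds l *)
  assert (exists k, l - d < Nat.iter k F u0) as [k Hk].
  { apply NNPP; intro Hn2. assert (l <= l - d); [|lra]. apply Hlub. intros z [k ->].
    apply Rnot_lt_le. intro. apply Hn2. exists k; auto. }
  assert (Hkl : Nat.iter k F u0 <= l) by (apply Hub; exists k; reflexivity).
  assert (HS : F (Nat.iter k F u0) <= l) by (apply Hub; exists (S k); reflexivity).
  assert (Hd' : Rabs (Nat.iter k F u0 - l) < d) by (unfold Rabs; destruct Rcase_abs; lra).
  specialize (Hcd _ (Hin k) Hd'). revert Hcd; unfold Rabs; destruct Rcase_abs; intros; lra.
Qed.

Lemma cont01_reflect g : cont01 g -> cont01 (fun z => 1 - g (1 - z)).
Proof.
  intros Hc x Hx eps Heps.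
  assert (Hx' : in01 (1 - x)) by (unfold in01 in *; lra).
  destruct (Hc (1 - x) Hx' eps Heps) as [d [Hd H]].
  exists d; split; auto. intros y Hy Hyx.
  assert (Hy' : in01 (1 - y)) by (unfold in01 in *; lra).
  replace (1 - g (1 - y) - (1 - g (1 - x))) with (- (g (1 - y) - g (1 - x))) by ring.
  rewrite Rabs_Ropp. apply H; auto.
  replace (1 - y - (1 - x)) with (- (y - x)) by ring. rewrite Rabs_Ropp; auto.
Qed.

Section Bump.
Variables (f g : R -> R) (a b x0 : R).
Hypothesis B : bump f g a b x0.

Lemma bump_inside_in01 x : a <= x <= b -> in01 x.
Proof. destruct (bump_order _ _ _ _ _ B). unfold in01; lra. Qed.

Lemma bump_ends_in01 : in01 a /\ in01 b.
Proof. destruct (bump_order _ _ _ _ _ B). split; apply bump_inside_in01; lra. Qed.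

Lemma bump_base_in01 : in01 x0.
Proof. destruct (bump_order _ _ _ _ _ B). apply bump_inside_in01; lra. Qed.

Lemma bump_stays_inside x : a < x < b -> a < f x < b.
Proof.
  intros Hx. destruct (bump_order _ _ _ _ _ B) as [_ [_ [_ Hb]]].
  assert (Hx01 : in01 x) by (apply bump_inside_in01; lra).
  assert (Hb01 : in01 b) by (apply bump_inside_in01; lra).
  assert (Hpush : x < f x) by (apply (bump_push _ _ _ _ _ B); lra).
  assert (Hfb : f x < f b) by (apply (bump_incr _ _ _ _ _ B); auto; lra).
  rewrite (bump_fix _ _ _ _ _ B b) in Hfb by (auto; lra). lra.
Qed.

Lemma bump_inv_fix x : in01 x -> ~ (a < x < b) -> g x = x.
Proof.
  intros Hx Hn. rewrite <- (bump_fix _ _ _ _ _ B x) at 1 by auto.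
  apply (bump_inv_l _ _ _ _ _ B); auto.
Qed.

(* The inverse g pulls (a,b) to the left within (a,b): g x > g a = a, and
   g x >= x is impossible since f would then push g x beyond f (g x) = x. *)
Lemma bump_inv_pull x : a < x < b -> a < g x < x.
Proof.
  intros Hx. destruct (bump_order _ _ _ _ _ B) as [Ha _].
  assert (Hx01 : in01 x) by (apply bump_inside_in01; lra).
  assert (Ha01 : in01 a) by (apply bump_inside_in01; lra).
  assert (Hg := bump_inv_maps _ _ _ _ _ B x Hx01).
  assert (Hga : g a < g x) by (apply (bump_inv_incr _ _ _ _ _ B); auto; lra).
  rewrite (bump_inv_fix a) in Hga by (auto; lra).
  split; auto. apply Rnot_le_lt. intro Hle.
  assert (Hfgx := bump_inv_r _ _ _ _ _ B x Hx01).
  destruct (Rlt_le_dec (g x) b) as [Hgb | Hgb].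
  - assert (Hp := bump_push _ _ _ _ _ B (g x) ltac:(lra)). lra.
  - assert (Hb01 : in01 b) by (apply bump_inside_in01; lra).
    assert (Hq : f b <= f (g x)) by (apply (incr01_le f (bump_incr _ _ _ _ _ B)); auto).
    rewrite (bump_fix _ _ _ _ _ B b) in Hq by (auto; lra). lra.
Qed.

Lemma escape_forward y : x0 <= y < b -> exists k, Nat.iter k f x0 > y.
Proof.
  intros Hy. destruct (bump_order _ _ _ _ _ B) as [H1 [H2 [H3 H4]]].
  apply escape; [apply (bump_cont _ _ _ _ _ B) | apply (bump_maps _ _ _ _ _ B)
                 | apply bump_base_in01 | lra |].
  intros z Hz. apply (bump_push _ _ _ _ _ B); lra.
Qed.

(* Backward iterates of x0 eventually pass any point of (a, x0], by the
   forward case applied to the reflection z |-> 1 - g (1 - z). *)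
Lemma escape_backward y : a < y <= x0 -> exists k, Nat.iter k g x0 < y.
Proof.
  intros Hy. destruct (bump_order _ _ _ _ _ B) as [H1 [H2 [H3 H4]]].
  set (G := fun z => 1 - g (1 - z)).
  assert (HG : forall k, Nat.iter k G (1 - x0) = 1 - Nat.iter k g x0).
  { induction k; simpl; auto. rewrite IHk. unfold G. do 2 f_equal. ring. }
  destruct (escape G (1 - x0) (1 - y)) as [k Hk].
  - apply cont01_reflect, (bump_inv_cont _ _ _ _ _ B).
  - intros z Hz. unfold G. assert (Hz' : in01 (1 - z)) by (unfold in01 in *; lra).
    assert (Hq := bump_inv_maps _ _ _ _ _ B (1 - z) Hz'). unfold in01 in *; lra.
  - unfold in01; lra.
  - lra.
  - intros z Hz. unfold G. destruct (bump_inv_pull (1 - z)); lra.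
  - exists k. rewrite HG in Hk. lra.
Qed.

End Bump.

Lemma step_crossing (s : Z -> R) y k : forall m, s m <= y -> y < s (m + Z.of_nat k)%Z ->
  exists n, s n <= y < s (n + 1)%Z.
Proof.
  induction k as [|k IH]; intros m H1 H2.
  - rewrite Z.add_0_r in H2. lra.
  - destruct (Rlt_le_dec y (s (m + 1)%Z)); [exists m; auto|].
    apply (IH (m + 1)%Z); auto.
    replace (m + 1 + Z.of_nat k)%Z with (m + Z.of_nat (S k))%Z by lia. auto.
Qed.

Section IterZ.
Variables (f g : R -> R) (a b x0 : R).

Definition iterZ (n : Z) (x : R) : R :=
  if Z_le_dec 0 n then Nat.iter (Z.to_nat n) f x else Nat.iter (Z.to_nat (- n)) g x.

Lemma iterZ_0 x : iterZ 0 x = x.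
Proof. unfold iterZ. destruct Z_le_dec; [reflexivity | lia]. Qed.

Lemma iterZ_nat k x : iterZ (Z.of_nat k) x = Nat.iter k f x.
Proof. unfold iterZ. destruct Z_le_dec; [rewrite Nat2Z.id; auto | lia]. Qed.

Lemma iterZ_negnat k x : iterZ (- Z.of_nat k) x = Nat.iter k g x.
Proof.
  destruct k; [apply iterZ_0|]. unfold iterZ. destruct Z_le_dec; [lia|].
  rewrite Z.opp_involutive, Nat2Z.id; auto.
Qed.

Hypothesis B : bump f g a b x0.

Lemma iterZ_in01 n x : in01 x -> in01 (iterZ n x).
Proof.
  intros Hx. unfold iterZ. destruct Z_le_dec; apply iter_in01; auto;
    [apply (bump_maps _ _ _ _ _ B) | apply (bump_inv_maps _ _ _ _ _ B)].
Qed.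

Lemma iterZ_succ n x : in01 x -> iterZ (n + 1) x = f (iterZ n x).
Proof.
  intros Hx. unfold iterZ.
  destruct (Z_le_dec 0 (n + 1)); destruct (Z_le_dec 0 n); try lia.
  - replace (Z.to_nat (n + 1)) with (S (Z.to_nat n)) by lia. reflexivity.
  - replace n with (-1)%Z by lia. simpl. symmetry. apply (bump_inv_r _ _ _ _ _ B); auto.
  - replace (Z.to_nat (- n)) with (S (Z.to_nat (- (n + 1)))) by lia. simpl.
    symmetry. apply (bump_inv_r _ _ _ _ _ B).
    apply iter_in01; auto. apply (bump_inv_maps _ _ _ _ _ B).
Qed.

Lemma iterZ_pred n x : in01 x -> iterZ (n - 1) x = g (iterZ n x).
Proof.
  intros Hx. assert (Hs := iterZ_succ (n - 1) x Hx).
  replace (n - 1 + 1)%Z with n in Hs by ring. rewrite Hs.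
  symmetry. apply (bump_inv_l _ _ _ _ _ B), iterZ_in01; auto.
Qed.

Lemma iterZ_1 x : in01 x -> iterZ 1 x = f x.
Proof. intros Hx. rewrite <- (iterZ_0 x) at 2. apply (iterZ_succ 0 x Hx). Qed.

Lemma iterZ_add m n x : in01 x -> iterZ (m + n) x = iterZ m (iterZ n x).
Proof.
  intros Hx. assert (Hy := iterZ_in01 n x Hx).
  induction m using Z.peano_ind.
  - rewrite iterZ_0. reflexivity.
  - replace (Z.succ m + n)%Z with (m + n + 1)%Z by lia.
    rewrite <- Z.add_1_r, !iterZ_succ, IHm by auto. reflexivity.
  - replace (Z.pred m + n)%Z with (m + n - 1)%Z by lia.
    rewrite <- Z.sub_1_r, !iterZ_pred, IHm by auto. reflexivity.
Qed.

Lemma iterZ_cancel n y : in01 y -> iterZ n (iterZ (- n) y) = y.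
Proof. intros Hy. rewrite <- iterZ_add by auto. rewrite Z.add_opp_diag_r. apply iterZ_0. Qed.

Lemma iterZ_incr n x y : in01 x -> in01 y -> x < y -> iterZ n x < iterZ n y.
Proof.
  intros Hx Hy Hxy. induction n using Z.peano_ind.
  - rewrite !iterZ_0; auto.
  - rewrite <- Z.add_1_r, !iterZ_succ by auto.
    apply (bump_incr _ _ _ _ _ B); auto; apply iterZ_in01; auto.
  - rewrite <- Z.sub_1_r, !iterZ_pred by auto.
    apply (bump_inv_incr _ _ _ _ _ B); auto; apply iterZ_in01; auto.
Qed.

Lemma iterZ_le n x y : in01 x -> in01 y -> x <= y -> iterZ n x <= iterZ n y.
Proof. intros Hx Hy [Hxy | ->]; [left; apply iterZ_incr | right]; auto. Qed.

Lemma iterZ_stays_inside n x : a < x < b -> a < iterZ n x < b.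
Proof.
  intros Hx. assert (Hx01 : in01 x) by (apply (bump_inside_in01 f g a b x0 B); lra).
  induction n using Z.peano_ind.
  - rewrite iterZ_0; auto.
  - rewrite <- Z.add_1_r, iterZ_succ by auto. apply (bump_stays_inside f g a b x0 B); auto.
  - rewrite <- Z.sub_1_r, iterZ_pred by auto.
    destruct (bump_inv_pull f g a b x0 B (iterZ n x)); auto; lra.
Qed.

Lemma iterZ_base_mono m n : (m <= n)%Z -> iterZ m x0 <= iterZ n x0.
Proof.
  intros Hmn. destruct (bump_order _ _ _ _ _ B) as [_ [H2 [H3 _]]].
  assert (Hx0 := bump_base_in01 f g a b x0 B).
  replace n with (m + Z.of_nat (Z.to_nat (n - m)))%Z by lia.
  induction (Z.to_nat (n - m)) as [|k IH]; [rewrite Z.add_0_r; lra|].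
  rewrite Nat2Z.inj_succ, <- Z.add_1_r, Z.add_assoc, iterZ_succ by auto.
  assert (Hq := iterZ_stays_inside (m + Z.of_nat k) x0 ltac:(lra)).
  assert (Hp := bump_push _ _ _ _ _ B (iterZ (m + Z.of_nat k) x0) Hq). lra.
Qed.

Definition in_level (n : Z) (y : R) : Prop := iterZ n x0 <= y < iterZ (n + 1) x0.

Lemma in_level_0 y : in_level 0 y <-> x0 <= y < f x0.
Proof.
  unfold in_level. rewrite iterZ_0, Z.add_0_l, iterZ_1 by apply (bump_base_in01 f g a b x0 B).
  tauto.
Qed.

Lemma in_level_inside n y : in_level n y -> a < y < b.
Proof.
  intros Hy. destruct (bump_order _ _ _ _ _ B) as [_ [H2 [H3 _]]].
  assert (Q1 := iterZ_stays_inside n x0 ltac:(lra)).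
  assert (Q2 := iterZ_stays_inside (n + 1) x0 ltac:(lra)).
  unfold in_level in Hy. lra.
Qed.

Lemma in_level_order m n y z : in_level m y -> in_level n z -> (m < n)%Z -> y < z.
Proof.
  intros Hy Hz Hmn. assert (Hq := iterZ_base_mono (m + 1) n ltac:(lia)).
  unfold in_level in *. lra.
Qed.

Lemma in_level_unique m n y : in_level m y -> in_level n y -> m = n.
Proof.
  intros Hm Hn. destruct (Z.lt_total m n) as [Hl | [Hl | Hl]]; auto; exfalso.
  - assert (Q := in_level_order m n y y Hm Hn Hl). lra.
  - assert (Q := in_level_order n m y y Hn Hm Hl). lra.
Qed.

(* Every point of (a,b) lies in some level, by escape in both directions. *)
Lemma in_level_exists y : a < y < b -> exists n, in_level n y.
Proof.
  intros Hy.
  assert (HM : exists M, y < iterZ M x0).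
  { destruct (Rlt_le_dec y x0); [exists 0%Z; rewrite iterZ_0; auto|].
    destruct (escape_forward f g a b x0 B y) as [k Hk]; [lra|].
    exists (Z.of_nat k). rewrite iterZ_nat. lra. }
  assert (Hm : exists m, iterZ m x0 <= y).
  { destruct (Rle_lt_dec x0 y); [exists 0%Z; rewrite iterZ_0; auto|].
    destruct (escape_backward f g a b x0 B y) as [k Hk]; [lra|].
    exists (- Z.of_nat k)%Z. rewrite iterZ_negnat. lra. }
  destruct HM as [M HM], Hm as [m Hm].
  assert (Hlt : (m < M)%Z).
  { destruct (Z_lt_le_dec m M); auto. assert (Hq := iterZ_base_mono M m l). lra. }
  apply (step_crossing (fun n => iterZ n x0) y (Z.to_nat (M - m)) m); auto.
  rewrite Z2Nat.id by lia. replace (m + (M - m))%Z with M by ring. auto.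
Qed.

Lemma in_level_shift m n y : in_level n y -> in_level (m + n) (iterZ m y).
Proof.
  intros Hy. assert (Hy01 : in01 y).
  { apply (bump_inside_in01 f g a b x0 B). assert (Q := in_level_inside n y Hy). lra. }
  assert (Hx0 := bump_base_in01 f g a b x0 B).
  unfold in_level in *.
  replace (m + n + 1)%Z with (m + (n + 1))%Z by ring.
  rewrite !(iterZ_add m) by auto. split.
  - apply iterZ_le; auto; [apply iterZ_in01; auto | lra].
  - apply iterZ_incr; auto; [apply iterZ_in01; auto | lra].
Qed.

End IterZ.

(** Extending a conjugacy from a fundamental domain to the whole support. *)

Section Extension.
Variables (f g : R -> R) (a b x0 : R) (f' g' : R -> R) (a' b' x0' : R) (ht0 : R -> R).
Hypothesis B : bump f g a b x0.
Hypothesis B' : bump f' g' a' b' x0'.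
Hypothesis ht0_maps : maps01 ht0.
Hypothesis ht0_incr : incr01 ht0.
Hypothesis ht0_onto : onto01 ht0.
Hypothesis ht0_a : ht0 a = a'.
Hypothesis ht0_b : ht0 b = b'.
Hypothesis ht0_x0 : ht0 x0 = x0'.
Hypothesis ht0_fx0 : ht0 (f x0) = f' x0'.

Definition level (y : R) : Z := epsilon (inhabits 0%Z) (fun n => in_level f g x0 n y).

(* The extension: outside (a,b) it is ht0; on the n-th level it is
   f'^n o ht0 o f^-n, i.e. ht0 on the fundamental domain transported by the
   dynamics. *)
Definition extension (y : R) : R :=
  if excluded_middle_informative (a < y < b)
  then iterZ f' g' (level y) (ht0 (iterZ f g (- level y) y))
  else ht0 y.

Lemma extension_outside y : ~ (a < y < b) -> extension y = ht0 y.
Proof. intros Hy. unfold extension. destruct excluded_middle_informative; tauto. Qed.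

Lemma extension_on_level n y : in_level f g x0 n y ->
  extension y = iterZ f' g' n (ht0 (iterZ f g (- n) y)).
Proof.
  intros Hn. assert (Hy := in_level_inside f g a b x0 B n y Hn).
  assert (Hl : level y = n).
  { apply (in_level_unique f g a b x0 B _ _ y); auto.
    unfold level. apply epsilon_spec. exists n; auto. }
  unfold extension. destruct excluded_middle_informative; [rewrite Hl; auto | tauto].
Qed.

Lemma ht0_fundamental_domain z : in_level f g x0 0 z -> in_level f' g' x0' 0 (ht0 z).
Proof.
  rewrite (in_level_0 f g a b x0 B), (in_level_0 f' g' a' b' x0' B').
  intros Hz. assert (Hx0 := bump_base_in01 f g a b x0 B).
  assert (Hfx0 := bump_maps _ _ _ _ _ B x0 Hx0).
  assert (Hz01 : in01 z) by (unfold in01 in *; lra).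
  rewrite <- ht0_fx0, <- ht0_x0. split.
  - apply (incr01_le ht0); auto; lra.
  - apply ht0_incr; auto; lra.
Qed.

Lemma extension_level n y : in_level f g x0 n y -> in_level f' g' x0' n (extension y).
Proof.
  intros Hn. rewrite (extension_on_level n y Hn).
  assert (Hback := in_level_shift f g a b x0 B (- n) n y Hn).
  rewrite Z.add_opp_diag_l in Hback.
  assert (Q := in_level_shift f' g' a' b' x0' B' n 0 _ (ht0_fundamental_domain _ Hback)).
  rewrite Z.add_0_r in Q. exact Q.
Qed.

Lemma ht0_outside y : in01 y -> ~ (a < y < b) -> ~ (a' < ht0 y < b').
Proof.
  intros Hy Hn. destruct (bump_ends_in01 f g a b x0 B) as [Ha01 Hb01].
  destruct (Rle_lt_dec y a).
  - assert (ht0 y <= ht0 a) by (apply (incr01_le ht0); auto). lra.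
  - assert (ht0 b <= ht0 y) by (apply (incr01_le ht0); auto; lra). lra.
Qed.

Lemma extension_inside y : a < y < b -> a' < extension y < b'.
Proof.
  intros Hy. destruct (in_level_exists f g a b x0 B y Hy) as [n Hn].
  apply (in_level_inside f' g' a' b' x0' B' n), extension_level; auto.
Qed.

Lemma extension_maps : maps01 extension.
Proof.
  intros y Hy. destruct (classic (a < y < b)) as [Hin | Hout].
  - apply (bump_inside_in01 f' g' a' b' x0' B').
    assert (Q := extension_inside y Hin). lra.
  - rewrite extension_outside; auto.
Qed.

Lemma extension_incr : incr01 extension.
Proof.
  intros x y Hx Hy Hxy.
  destruct (bump_ends_in01 f g a b x0 B) as [Ha01 Hb01].
  destruct (classic (a < x < b)) as [Ix | Ox]; destruct (classic (a < y < b)) as [Iy | Oy].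
  - destruct (in_level_exists f g a b x0 B x Ix) as [n Hn].
    destruct (in_level_exists f g a b x0 B y Iy) as [m Hm].
    destruct (Z.lt_total n m) as [Hl | [<- | Hl]].
    + apply (in_level_order f' g' a' b' x0' B' n m); auto; apply extension_level; auto.
    + rewrite (extension_on_level n x), (extension_on_level n y) by auto.
      assert (Qx := in_level_shift f g a b x0 B (- n) n x Hn).
      assert (Qy := in_level_shift f g a b x0 B (- n) n y Hm).
      rewrite Z.add_opp_diag_l, (in_level_0 f g a b x0 B) in Qx, Qy.
      assert (Hx0 := bump_base_in01 f g a b x0 B).
      assert (Hfx0 := bump_maps _ _ _ _ _ B x0 Hx0).
      apply (iterZ_incr f' g' a' b' x0' B'); try (apply ht0_maps; unfold in01 in *; lra).
      apply ht0_incr; try (unfold in01 in *; lra).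
      apply (iterZ_incr f g a b x0 B); auto.
    + assert (Q := in_level_order f g a b x0 B m n y x Hm Hn Hl). lra.
  - rewrite (extension_outside y) by auto. assert (Q := extension_inside x Ix).
    assert (ht0 b <= ht0 y) by (apply (incr01_le ht0); auto; lra). lra.
  - rewrite (extension_outside x) by auto. assert (Q := extension_inside y Iy).
    assert (ht0 x <= ht0 a) by (apply (incr01_le ht0); auto; lra). lra.
  - rewrite !extension_outside; auto.
Qed.

Lemma extension_onto : onto01 extension.
Proof.
  intros w Hw. destruct (classic (a' < w < b')) as [Hin | Hout].
  - destruct (in_level_exists f' g' a' b' x0' B' w Hin) as [n Hn].
    assert (Hv := in_level_shift f' g' a' b' x0' B' (- n) n w Hn).
    rewrite Z.add_opp_diag_l in Hv.
    assert (Hv01 : in01 (iterZ f' g' (- n) w)).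
    { apply (bump_inside_in01 f' g' a' b' x0' B').
      assert (Q := in_level_inside f' g' a' b' x0' B' 0 _ Hv). lra. }
    destruct (ht0_onto _ Hv01) as [z [Hz Ez]].
    (* z lies in the fundamental domain of f, since ht0 is increasing *)
    assert (Hz0 : in_level f g x0 0 z).
    { rewrite (in_level_0 f g a b x0 B).
      rewrite (in_level_0 f' g' a' b' x0' B'), <- Ez, <- ht0_fx0, <- ht0_x0 in Hv.
      assert (Hx0 := bump_base_in01 f g a b x0 B).
      assert (Hfx0 := bump_maps _ _ _ _ _ B x0 Hx0).
      split; [apply (incr01_le_rev ht0) | apply (incr01_lt_rev ht0)]; auto; lra. }
    assert (Hp := in_level_shift f g a b x0 B n 0 z Hz0). rewrite Z.add_0_r in Hp.
    exists (iterZ f g n z). split; [apply (iterZ_in01 f g a b x0 B); auto|].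
    rewrite (extension_on_level n _ Hp), <- (iterZ_add f g a b x0 B) by auto.
    rewrite Z.add_opp_diag_l, iterZ_0, Ez.
    apply (iterZ_cancel f' g' a' b' x0' B'); auto.
  - destruct (ht0_onto _ Hw) as [z [Hz Ez]]. exists z. split; auto.
    rewrite extension_outside; auto. intros Hzab.
    destruct (bump_ends_in01 f g a b x0 B) as [Ha01 Hb01].
    assert (ht0 a < ht0 z) by (apply ht0_incr; auto; lra).
    assert (ht0 z < ht0 b) by (apply ht0_incr; auto; lra). lra.
Qed.

Lemma extension_on_domain y : x0 <= y < f x0 -> extension y = ht0 y.
Proof.
  intros Hy. rewrite <- (in_level_0 f g a b x0 B) in Hy.
  rewrite (extension_on_level 0 y Hy), Z.opp_0, !iterZ_0. reflexivity.
Qed.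

(* The extension conjugates f to f': f moves each level to the next one. *)
Lemma extension_conj y : in01 y -> extension (f y) = f' (extension y).
Proof.
  intros Hy. destruct (classic (a < y < b)) as [Hin | Hout].
  - destruct (in_level_exists f g a b x0 B y Hin) as [n Hn].
    assert (Hf1 := in_level_shift f g a b x0 B 1 n y Hn).
    rewrite (iterZ_1 f g a b x0 B) in Hf1 by auto. rewrite Z.add_comm in Hf1.
    rewrite (extension_on_level _ _ Hf1), (extension_on_level _ _ Hn).
    rewrite <- (iterZ_1 f g a b x0 B y) by auto.
    rewrite <- (iterZ_add f g a b x0 B) by auto.
    replace (- (n + 1) + 1)%Z with (- n)%Z by ring.
    apply (iterZ_succ f' g' a' b' x0' B'), ht0_maps, (iterZ_in01 f g a b x0 B); auto.
  - rewrite (bump_fix _ _ _ _ _ B y), extension_outside by auto.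
    rewrite (bump_fix _ _ _ _ _ B' (ht0 y)); auto. apply ht0_outside; auto.
Qed.

End Extension.

Lemma good_domain_end t : good_triple t -> ib t = tf t (ia t).
Proof. intros [_ [_ [_ [_ E]]]]. exact E. Qed.

Lemma good_domain_order t : good_triple t -> sa t < ia t /\ ia t < ib t /\ ib t < sb t.
Proof.
  intros Ht. destruct (good_bump t Ht) as [g B]. rewrite (good_domain_end t Ht).
  destruct Ht as [_ [_ [_ [Hfd _]]]].
  assert (Q := bump_stays_inside _ _ _ _ _ B (ia t) Hfd).
  assert (P := bump_push _ _ _ _ _ B (ia t) Hfd). lra.
Qed.

Lemma good_maps t : good_triple t -> maps01 (tf t).
Proof. intros [[[Hm _] _] _]. exact Hm. Qed.

Lemma good_stays_inside t x : good_triple t -> sa t < x < sb t -> sa t < tf t x < sb t.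
Proof. intros Ht Hx. destruct (good_bump t Ht) as [g B]. apply (bump_stays_inside _ _ _ _ _ B); auto. Qed.

Lemma good_in01 t x : good_triple t -> sa t <= x <= sb t -> in01 x.
Proof. intros Ht Hx. destruct (good_support_in01 t Ht). unfold in01 in *. lra. Qed.

(** Conjugating a whole fundamental system. *)

Definition nested (t u : triple) : Prop :=
  disj_int (sa t) (sb t) (sa u) (sb u) \/ seg_sub (sa t) (sb t) (ia u) (ib u) \/
  seg_sub (sa u) (sb u) (ia t) (ib t).

Definition transported (h : R -> R) (t t' : triple) : Prop :=
  sa t' = h (sa t) /\ sb t' = h (sb t) /\ ia t' = h (ia t) /\ ib t' = h (ib t).

Definition width (t : triple) : R := sb t - sa t.

Lemma disj_int_point a b c d p : disj_int a b c d -> c < d -> a < p < b -> c <= p <= d -> False.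
Proof.
  intros D Hcd Hp Hq. destruct (Rlt_le_dec p d).
  - apply (D (p + Rmin (b - p) (d - p) / 2)). unfold Rmin; destruct Rle_dec; lra.
  - apply (D (p - Rmin (p - a) (p - c) / 2)). unfold Rmin; destruct Rle_dec; lra.
Qed.

Lemma disj_int_image h a b c d : maps01 h -> incr01 h -> onto01 h ->
  in01 a -> in01 b -> in01 c -> in01 d ->
  disj_int a b c d -> disj_int (h a) (h b) (h c) (h d).
Proof.
  intros Hm Hi Ho Ha Hb Hc Hd D z [[Z1 Z2] [Z3 Z4]].
  assert (Hz : in01 z).
  { assert (Q1 := Hm a Ha). assert (Q2 := Hm b Hb). unfold in01 in *; lra. }
  destruct (Ho z Hz) as [w [Hw <-]].
  apply (D w). repeat split; apply (incr01_lt_rev h); auto.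
Qed.

Lemma exists_widest (I : Type) (w : I -> R) (l : list I) (P : I -> Prop) :
  (forall i, P i -> In i l) -> (exists i, P i) -> exists r, P r /\ forall k, P k -> w k <= w r.
Proof.
  revert P. induction l as [|a l IH]; intros P Hl [i Hi]; [destruct (Hl i Hi)|].
  destruct (classic (exists j, P j /\ In j l)) as [Hex | Hno].
  - destruct (IH (fun k => P k /\ In k l)) as [r [[Pr _] Hr]]; [tauto | auto |].
    destruct (classic (P a /\ w r < w a)) as [[Pa Hlt] | Hnot].
    + exists a. split; auto. intros k Pk. destruct (Hl k Pk) as [<- | Hk]; [lra|].
      assert (Q := Hr k (conj Pk Hk)). lra.
    + exists r. split; auto. intros k Pk.
      destruct (Hl k Pk) as [<- | Hk]; [| apply Hr; auto].
      apply Rnot_lt_le. intro. apply Hnot. auto.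
  - assert (Pa : P a) by (destruct (Hl i Hi) as [<- | Hil]; [auto | exfalso; eauto]).
    exists a. split; auto. intros k Pk. destruct (Hl k Pk) as [<- | Hk]; [lra | exfalso; eauto].
Qed.

Lemma remove_one (I : Type) (r : I) (l : list I) : In r l ->
  exists l', (length l' < length l)%nat /\ forall x, In x l -> x <> r -> In x l'.
Proof.
  induction l as [|a l IH]; intros Hr; [destruct Hr|].
  destruct (classic (a = r)) as [<- | Har].
  - exists l. split; [simpl; lia|]. intros x [<- | Hx] Hxr; [congruence | auto].
  - destruct Hr as [Hr | Hr]; [congruence|]. destruct (IH Hr) as [l' [Hlen Hl']].
    exists (a :: l'). split; [simpl; lia|]. intros x [<- | Hx] Hxr; [left | right]; auto.
Qed.

Lemma widest_first_induction (I : Type) (w : I -> R) (Q : (I -> Prop) -> Prop) :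
  (forall P, (forall i, ~ P i) -> Q P) ->
  (forall P r, P r -> (forall k, P k -> w k <= w r) -> Q (fun k => P k /\ k <> r) -> Q P) ->
  forall l P, (forall i, P i -> In i l) -> Q P.
Proof.
  intros Hbase Hstep l. remember (length l) as n. revert l Heqn.
  induction n as [n IH] using lt_wf_ind. intros l Hn P Hl.
  destruct (classic (exists i, P i)) as [Hex | Hno]; [| apply Hbase; eauto].
  destruct (exists_widest I w l P Hl Hex) as [r [Pr Hr]].
  destruct (remove_one I r l (Hl r Pr)) as [l' [Hlen Hl']].
  apply (Hstep P r Pr Hr), (IH (length l')) with l'; [lia | auto |].
  intros k [Pk Hk]. apply Hl'; auto.
Qed.

Section SystemConjugacy.
Variables (I : Type) (S S' : I -> triple) (h : R -> R).
Hypothesis S_good : forall i, good_triple (S i).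
Hypothesis S'_good : forall i, good_triple (S' i).
Hypothesis S_nested : forall i j, i <> j -> nested (S i) (S j).
Hypothesis h_maps : maps01 h.
Hypothesis h_incr : incr01 h.
Hypothesis h_onto : onto01 h.
Hypothesis S'_image : forall i, transported h (S i) (S' i).

Record partial_conjugacy (P : I -> Prop) (ht : R -> R) : Prop := {
  pc_maps : maps01 ht;
  pc_incr : incr01 ht;
  pc_onto : onto01 ht;
  pc_conj : forall i, P i -> forall x, in01 x -> ht (tf (S i) x) = tf (S' i) (ht x);
  pc_off : forall x, in01 x -> (forall i, P i -> ~ (sa (S i) < x < sb (S i))) -> ht x = h x }.

Lemma partial_conjugacy_empty (P : I -> Prop) : (forall i, ~ P i) -> partial_conjugacy P h.
Proof. intros Hno. constructor; auto. intros i Hi. destruct (Hno i Hi). Qed.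

(* A triple of width at most that of r is either disjoint from r or nested in
   the fundamental domain of r: it cannot contain r in its own fundamental
   domain, which is strictly narrower than its support. *)
Lemma narrower_nested k r : k <> r -> width (S k) <= width (S r) ->
  disj_int (sa (S k)) (sb (S k)) (sa (S r)) (sb (S r)) \/
  (ia (S r) <= sa (S k) /\ sb (S k) <= ib (S r)).
Proof.
  intros Hkr Hw. unfold width in Hw.
  destruct (good_domain_order _ (S_good k)) as [K1 [K2 K3]].
  destruct (good_domain_order _ (S_good r)) as [R1 [R2 R3]].
  destruct (S_nested k r Hkr) as [D | [D | D]]; [left; auto | right | exfalso].
  - assert (Q1 := D (sa (S k)) ltac:(unfold seg; lra)).
    assert (Q2 := D (sb (S k)) ltac:(unfold seg; lra)). unfold seg in *. lra.
  - assert (Q1 := D (sa (S r)) ltac:(unfold seg; lra)).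
    assert (Q2 := D (sb (S r)) ltac:(unfold seg; lra)). unfold seg in *. lra.
Qed.

(* If ht differs from ht0 only inside the support of r, which it maps into
   the support of S' r, it still conjugates S k to S' k when the support of k
   is disjoint from that of r: both maps are trivial there. *)
Lemma conj_disjoint k r ht0 ht :
  disj_int (sa (S k)) (sb (S k)) (sa (S r)) (sb (S r)) ->
  (forall x, in01 x -> ~ (sa (S r) < x < sb (S r)) -> ht x = ht0 x) ->
  (forall x, sa (S r) < x < sb (S r) -> sa (S' r) < ht x < sb (S' r)) ->
  (forall x, in01 x -> ht0 (tf (S k) x) = tf (S' k) (ht0 x)) ->
  forall x, in01 x -> ht (tf (S k) x) = tf (S' k) (ht x).
Proof.
  intros D Hout Hin Hc0 x Hx.
  destruct (good_support_in01 _ (S_good k)) as [Ka Kb].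
  destruct (good_support_in01 _ (S_good r)) as [Ra Rb].
  assert (D' : disj_int (sa (S' k)) (sb (S' k)) (sa (S' r)) (sb (S' r))).
  { destruct (S'_image k) as [-> [-> _]]. destruct (S'_image r) as [-> [-> _]].
    apply disj_int_image; auto. }
  destruct (classic (sa (S r) < x < sb (S r))) as [Ix | Ox].
  - assert (Q := Hin x Ix).
    rewrite (good_fix_outside _ (S_good k) x) by (auto; intro; apply (D x); tauto).
    rewrite (good_fix_outside _ (S'_good k) (ht x)); auto.
    + apply (good_in01 _ _ (S'_good r)); lra.
    + intro; apply (D' (ht x)); tauto.
  -
    assert (Ofx : ~ (sa (S r) < tf (S k) x < sb (S r))).
    { destruct (classic (sa (S k) < x < sb (S k))) as [Kx | Kx].
      - intro. apply (D (tf (S k) x)). split; auto. apply good_stays_inside; auto.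
      - rewrite good_fix_outside; auto. }
    rewrite !Hout; auto. apply (good_maps _ (S_good k)); auto.
Qed.

Lemma conj_nested k r ht0 ht :
  ia (S r) <= sa (S k) -> sb (S k) <= ib (S r) ->
  (forall x, ia (S r) <= x < ib (S r) -> ht x = ht0 x) ->
  maps01 ht -> incr01 ht -> ht (ia (S r)) = ia (S' r) -> ht (ib (S r)) = ib (S' r) ->
  (forall x, in01 x -> ht0 (tf (S k) x) = tf (S' k) (ht0 x)) ->
  forall x, in01 x -> ht (tf (S k) x) = tf (S' k) (ht x).
Proof.
  intros Hka Hkb Hdom Hm Hi Hia Hib Hc0 x Hx.
  destruct (good_support_in01 _ (S_good k)) as [Ka Kb].
  destruct (good_domain_order _ (S_good r)) as [R1 [R2 R3]].
  assert (Ria := good_in01 _ (ia (S r)) (S_good r) ltac:(lra)).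
  assert (Rib := good_in01 _ (ib (S r)) (S_good r) ltac:(lra)).
  assert (Hka' : ia (S' r) <= sa (S' k)).
  { destruct (S'_image k) as [-> _]. destruct (S'_image r) as [_ [_ [-> _]]].
    apply (incr01_le h); auto. }
  assert (Hkb' : sb (S' k) <= ib (S' r)).
  { destruct (S'_image k) as [_ [-> _]]. destruct (S'_image r) as [_ [_ [_ ->]]].
    apply (incr01_le h); auto. }
  destruct (classic (ia (S r) <= x < ib (S r))) as [Ix | Ox].
  -
    assert (Ifx : ia (S r) <= tf (S k) x < ib (S r)).
    { destruct (classic (sa (S k) < x < sb (S k))) as [Kx | Kx].
      - assert (Q := good_stays_inside _ x (S_good k) Kx). lra.
      - rewrite good_fix_outside; auto. }
    rewrite !Hdom; auto.
  - rewrite (good_fix_outside _ (S_good k) x) by (auto; lra).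
    assert (Hhx : ht x < ia (S' r) \/ ib (S' r) <= ht x).
    { rewrite <- Hia, <- Hib. destruct (Rlt_le_dec x (ia (S r))).
      - left. apply Hi; auto.
      - right. apply (incr01_le ht); auto; lra. }
    rewrite (good_fix_outside _ (S'_good k) (ht x)); auto; lra.
Qed.

(* If r has maximal width in P, the points of its support outside the open
   fundamental domain lie in no other support of P, so a partial conjugacy
   for P minus r still agrees with h there. *)
Lemma partial_conjugacy_markers P r ht0 :
  (forall k, P k -> width (S k) <= width (S r)) ->
  partial_conjugacy (fun k => P k /\ k <> r) ht0 ->
  forall p, sa (S r) <= p <= sb (S r) -> (p <= ia (S r) \/ ib (S r) <= p) -> ht0 p = h p.
Proof.
  intros Hmax Hpc p Hp Hpd. apply (pc_off _ _ Hpc).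
  - apply (good_in01 _ _ (S_good r)); auto.
  - intros k [Pk Hkr] Hk.
    destruct (narrower_nested k r Hkr (Hmax k Pk)) as [D | [D1 D2]]; [|lra].
    destruct (good_domain_order _ (S_good r)) as [R1 [R2 R3]].
    apply (disj_int_point _ _ _ _ p D); lra.
Qed.

(* Induction step: a partial conjugacy for P minus a widest triple r is
   extended over the support of r by transporting it from the fundamental
   domain of r along the dynamics; the narrower triples are disjoint from r or
   nested in its fundamental domain, where nothing changes. *)
Lemma partial_conjugacy_step P r ht0 : P r ->
  (forall k, P k -> width (S k) <= width (S r)) ->
  partial_conjugacy (fun k => P k /\ k <> r) ht0 -> exists ht, partial_conjugacy P ht.
Proof.
  intros Pr Hmax Hpc.
  assert (Hmark := partial_conjugacy_markers P r ht0 Hmax Hpc).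
  destruct (good_bump _ (S_good r)) as [g B], (good_bump _ (S'_good r)) as [g' B'].
  destruct (good_domain_order _ (S_good r)) as [R1 [R2 R3]].
  destruct (S'_image r) as [Ea [Eb [Ei Ej]]].
  assert (Hib := good_domain_end _ (S_good r)).
  assert (Hib' := good_domain_end _ (S'_good r)).
  set (ht := extension (tf (S r)) g (sa (S r)) (sb (S r)) (ia (S r)) (tf (S' r)) g' ht0).
  assert (Ea0 : ht0 (sa (S r)) = sa (S' r)) by (rewrite Ea; apply Hmark; lra).
  assert (Eb0 : ht0 (sb (S r)) = sb (S' r)) by (rewrite Eb; apply Hmark; lra).
  assert (Ei0 : ht0 (ia (S r)) = ia (S' r)) by (rewrite Ei; apply Hmark; lra).
  assert (Ej0 : ht0 (tf (S r) (ia (S r))) = tf (S' r) (ia (S' r)))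
    by (rewrite <- Hib, <- Hib', Ej; apply Hmark; lra).
  assert (Hm0 := pc_maps _ _ Hpc). assert (Hi0 := pc_incr _ _ Hpc).
  assert (Ho0 := pc_onto _ _ Hpc).
  assert (Hout : forall x, in01 x -> ~ (sa (S r) < x < sb (S r)) -> ht x = ht0 x)
    by (intros x _; apply extension_outside).
  assert (Hin : forall x, sa (S r) < x < sb (S r) -> sa (S' r) < ht x < sb (S' r))
    by (apply (extension_inside _ _ _ _ _ _ _ _ _ _ _ B B'); auto).
  assert (Hm : maps01 ht) by (apply (extension_maps _ _ _ _ _ _ _ _ _ _ _ B B'); auto).
  assert (Hi : incr01 ht) by (apply (extension_incr _ _ _ _ _ _ _ _ _ _ _ B B'); auto).
  assert (Hdom : forall x, ia (S r) <= x < ib (S r) -> ht x = ht0 x).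
  { intros x Hx. apply (extension_on_domain _ _ _ _ _ _ _ _ B). rewrite <- Hib; auto. }
  assert (Hconj : forall x, in01 x -> ht (tf (S r) x) = tf (S' r) (ht x))
    by (apply (extension_conj _ _ _ _ _ _ _ _ _ _ _ B B'); auto).
  assert (Hia : ht (ia (S r)) = ia (S' r)) by (rewrite Hdom; auto; lra).
  exists ht. constructor; auto.
  - apply (extension_onto _ _ _ _ _ _ _ _ _ _ _ B B'); auto.
  - intros k Pk. destruct (classic (k = r)) as [-> | Hkr]; auto.
    assert (Hc0 := pc_conj _ _ Hpc k (conj Pk Hkr)).
    destruct (narrower_nested k r Hkr (Hmax k Pk)) as [D | [D1 D2]].
    + apply (conj_disjoint k r ht0); auto.
    + apply (conj_nested k r ht0); auto.
      rewrite Hib, Hib', Hconj, Hia; auto. apply (good_in01 _ _ (S_good r)); lra.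
  - intros x Hx Hno. rewrite Hout by (auto; apply Hno; auto).
    apply (pc_off _ _ Hpc); auto. intros k [Pk _]. apply Hno; auto.
Qed.

Lemma system_conjugacy (l : list I) : (forall i, In i l) ->
  exists ht, partial_conjugacy (fun _ => True) ht.
Proof.
  intros Hl. apply (widest_first_induction I (fun i => width (S i))
                      (fun P => exists ht, partial_conjugacy P ht)) with l.
  - intros P Hno. exists h. apply partial_conjugacy_empty; auto.
  - intros P r Pr Hmax [ht0 Hpc]. apply (partial_conjugacy_step P r ht0); auto.
  - intros i _. auto.
Qed.

End SystemConjugacy.

Lemma seg_image_ends (h : R -> R) a b a' b' : incr01 h -> in01 a -> in01 b -> a <= b ->
  a' <= b' -> (forall y, seg a' b' y <-> image_seg h a b y) -> a' = h a /\ b' = h b.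
Proof.
  intros Hi Ha Hb Hab Hab' Heq.
  destruct (proj1 (Heq a') ltac:(unfold seg; lra)) as [x1 [Hx1 E1]].
  destruct (proj1 (Heq b') ltac:(unfold seg; lra)) as [x2 [Hx2 E2]].
  assert (Q1 := proj2 (Heq (h a)) ltac:(exists a; unfold seg; split; [lra | auto])).
  assert (Q2 := proj2 (Heq (h b)) ltac:(exists b; unfold seg; split; [lra | auto])).
  unfold seg in *.
  assert (h a <= h x1) by (apply (incr01_le h); auto; unfold in01 in *; lra).
  assert (h x2 <= h b) by (apply (incr01_le h); auto; unfold in01 in *; lra).
  split; lra.
Qed.

Lemma transported_of_images (h : R -> R) (t t' : triple) :
  incr01 h -> good_triple t -> good_triple t' ->
  (forall y, seg (sa t') (sb t') y <-> image_seg h (sa t) (sb t) y) ->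
  (forall y, seg (ia t') (ib t') y <-> image_seg h (ia t) (ib t) y) ->
  transported h t t'.
Proof.
  intros Hi Ht Ht' Hsupp Hdom.
  destruct (good_domain_order t Ht) as [K1 [K2 K3]].
  destruct (good_domain_order t' Ht') as [K1' [K2' K3']].
  destruct (good_support_in01 t Ht) as [Ha Hb].
  assert (Hia : in01 (ia t)) by (apply (good_in01 t); [auto | lra]).
  assert (Hib : in01 (ib t)) by (apply (good_in01 t); [auto | lra]).
  destruct (seg_image_ends h (sa t) (sb t) (sa t') (sb t') Hi Ha Hb) as [Ea Eb];
    auto; try lra.
  destruct (seg_image_ends h (ia t) (ib t) (ia t') (ib t') Hi Hia Hib) as [Ei Ej];
    auto; try lra.
  repeat split; auto.
Qed.

(** Conjugate generating sets generate conjugate groups. *)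

Lemma gen_maps {Idx : Type} (F : Idx -> R -> R) g :
  (forall i, maps01 (F i)) -> gen F g -> maps01 g.
Proof.
  intros HF Hg. induction Hg as [| g g' _ IH E | i g _ IH | i g g' _ IH Hinv]; intros x Hx.
  - auto.
  - rewrite <- E; auto.
  - apply HF, IH; auto.
  - apply Hinv; auto.
Qed.

Section ConjugateGroups.
Variables (I J : Type) (F : I -> R -> R) (F' : J -> R -> R) (phi : I -> J).
Variables (ht hi : R -> R).
Hypothesis F_maps : forall i, maps01 (F i).
Hypothesis ht_maps : maps01 ht.
Hypothesis hi_maps : maps01 hi.
Hypothesis hi_ht : forall x, in01 x -> hi (ht x) = x.
Hypothesis ht_hi : forall y, in01 y -> ht (hi y) = y.
Hypothesis phi_onto : forall j, exists i, phi i = j.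
Hypothesis ht_conj : forall i x, in01 x -> ht (F i x) = F' (phi i) (ht x).

Lemma gen_conj_pull g' : gen F' g' ->
  exists g, gen F g /\ forall x, in01 x -> ht (g x) = g' (ht x).
Proof.
  induction 1 as [| g0 g1 _ IH E | j g0 _ IH | j g0 g1 _ IH Hinv].
  - exists (fun x => x). split; [constructor | auto].
  - destruct IH as [g [Hg Hc]]. exists g. split; auto.
    intros x Hx. rewrite Hc by auto. apply E; auto.
  - destruct (phi_onto j) as [i <-]. destruct IH as [g [Hg Hc]].
    exists (fun x => F i (g x)). split; [apply gen_mul; auto|].
    intros x Hx. rewrite ht_conj by (apply (gen_maps F g); auto). rewrite Hc; auto.
  - destruct (phi_onto j) as [i <-]. destruct IH as [g [Hg Hc]].
    (* the pullback hi o g1 o ht of g1 satisfies F i o (hi o g1 o ht) = g *)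
    exists (fun x => hi (g1 (ht x))). split.
    + apply (gen_inv F i g); auto. intros x Hx.
      destruct (Hinv (ht x) (ht_maps x Hx)) as [W1 W2]. split; [apply hi_maps; auto|].
      rewrite <- (hi_ht (F i (hi (g1 (ht x))))) by (apply F_maps, hi_maps; auto).
      rewrite ht_conj, ht_hi, W2, <- Hc by auto. apply hi_ht, (gen_maps F g); auto.
    + intros x Hx. apply ht_hi, Hinv; auto.
Qed.

Lemma gen_conj_push g : gen F g ->
  forall g', (forall x, in01 x -> ht (g x) = g' (ht x)) -> gen F' g'.
Proof.
  induction 1 as [| g0 g1 Hg0 IH E | i g0 Hg0 IH | i g0 g1 Hg0 IH Hinv]; intros g'' Hc.
  - apply gen_ext with (fun x => x); [constructor|].
    intros w Hw. rewrite <- (ht_hi w) at 1 by auto. rewrite Hc, ht_hi by auto. reflexivity.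
  - apply IH. intros x Hx. rewrite E; auto.
  - apply gen_ext with (fun w => F' (phi i) (ht (g0 (hi w)))).
    + apply gen_mul, IH. intros x Hx. rewrite hi_ht; auto.
    + intros w Hw. assert (Hw' := hi_maps w Hw).
      rewrite <- ht_conj, Hc, ht_hi by (auto; apply (gen_maps F g0); auto). reflexivity.
  - apply (gen_inv F' (phi i) (fun w => ht (g0 (hi w)))).
    + apply IH. intros x Hx. rewrite hi_ht; auto.
    + intros w Hw. assert (Hw' := hi_maps w Hw). destruct (Hinv (hi w) Hw') as [W1 W2].
      assert (E : g'' w = ht (g1 (hi w))) by (rewrite Hc, ht_hi; auto).
      rewrite E. split; [apply ht_maps; auto|]. rewrite <- ht_conj, W2 by auto. reflexivity.
Qed.

End ConjugateGroups.

Theorem mainTheorem20 (I J : Type) (S : I -> triple) (Sigma : J -> triple)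
  (HIfin : finite_type I) (HJfin : finite_type J)
  (HS : fund_system S) (HSigma : fund_system Sigma)
  (h : R -> R) (Hh : or_pres_homeo01 h)
  (phi : I -> J) (Hphi : bijective_map phi)
  (HSupp : forall i y, seg (sa (Sigma (phi i))) (sb (Sigma (phi i))) y
                        <-> image_seg h (sa (S i)) (sb (S i)) y)
  (HDom : forall i y, seg (ia (Sigma (phi i))) (ib (Sigma (phi i))) y
                        <-> image_seg h (ia (S i)) (ib (S i)) y) :
  exists ht : R -> R, homeo01 ht /\
    (forall i x, in01 x -> ht (tf (S i) x) = tf (Sigma (phi i)) (ht x)) /\
    (forall g', gen (fun j => tf (Sigma j)) g' <->
       exists g, gen (fun i => tf (S i)) g /\
         forall x, in01 x -> ht (g x) = g' (ht x)).
Proof.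
  destruct Hh as [[Hm [_ [hg [Hgm [_ [_ Hhg]]]]]] Hi].
  assert (Ho : onto01 h) by (intros w Hw; exists (hg w); split; auto).
  destruct HS as [HG Hnest], HSigma as [HG' _], HIfin as [l Hl].
  assert (Htr : forall i, transported h (S i) (Sigma (phi i)))
    by (intro i; apply transported_of_images; auto).
  destruct (system_conjugacy I S (fun i => Sigma (phi i)) h HG (fun i => HG' (phi i))
              Hnest Hm Hi Ho Htr l Hl) as [ht Hpc].
  assert (Hconj : forall i x, in01 x -> ht (tf (S i) x) = tf (Sigma (phi i)) (ht x))
    by (intros i; apply (pc_conj _ _ _ _ _ _ Hpc); auto).
  assert (Hhom : homeo01 ht) by (apply incr01_homeo; apply Hpc).
  exists ht. split; [auto|]. split; [auto|].
  destruct Hhom as [Hm1 [_ [hi [Him [_ [Hhi Hih]]]]]].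
  assert (HF : forall i, maps01 (tf (S i))) by (intro i; apply good_maps; auto).
  intro g'. split.
  - apply (gen_conj_pull I J _ _ phi ht hi); auto. apply Hphi.
  - intros [g [Hg Hc]]. apply (gen_conj_push I J _ _ phi ht hi HF Hm1 Him Hhi Hih Hconj g Hg g' Hc).
Qed.
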